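(* Let $v$ be an integrable function on $[0,\infty)$ and suppose there exist two integrable functions $z_1,z_2$ on $[0,\infty)$ such that $$z_1(x)\le v(x)\le z_2(x)\quad\text{for all } x\in[0,\infty).$$ Then for all $x>0$, $\alpha>0$, $\rho>0$, $\delta>0$ and $\beta,\eta,k,\lambda\in\mathbb{R}$, $$ {}^{\rho}\mathcal{J}^{\alpha,\beta}_{\eta,k}z_2(x)\,{}^{\rho}\mathcal{J}^{\delta,\lambda}_{\eta,k}v(x)+{}^{\rho}\mathcal{J}^{\alpha,\beta}_{\eta,k}v(x)\,{}^{\rho}\mathcal{J}^{\delta,\lambda}_{\eta,k}z_1(x)\ \ge\ {}^{\rho}\mathcal{J}^{\alpha,\beta}_{\eta,k}v(x)\,{}^{\rho}\mathcal{J}^{\delta,\lambda}_{\eta,k}v(x)+{}^{\rho}\mathcal{J}^{\alpha,\beta}_{\eta,k}z_2(x)\,{}^{\rho}\mathcal{J}^{\delta,\lambda}_{\eta,k}z_1(x).$$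
   Context: For a function $f$ on $[0,\infty)$, $x>0$, $\alpha>0$, $\rho>0$ and $\beta,\eta,k\in\mathbb{R}$, the generalized Katugampola fractional integral is $${}^{\rho}\mathcal{J}^{\alpha,\beta}_{\eta,k}f(x)=\frac{\rho^{1-\beta}x^{k}}{\Gamma(\alpha)}\int_0^x\frac{\tau^{\rho(\eta+1)-1}}{(x^\rho-\tau^\rho)^{1-\alpha}}f(\tau)\,d\tau,$$ defined whenever the integral exists; all such integrals appearing in the statement are assumed to exist. *)

From mathcomp Require Import all_boot all_order all_algebra.
From mathcomp Require Import all_classical all_reals all_analysis.
Set Implicit Arguments. Unset Strict Implicit. Unset Printing Implicit Defensive.
Import Order.TTheory GRing.Theory Num.Theory.
Local Open Scope classical_set_scope.
Local Open Scope ring_scope.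

Definition Gamma (R : realType) (a : R) : R :=
  Rintegral (@lebesgue_measure R) `]0%R, +oo[
    (fun t => powR t (a - 1) * expR (- t)).

Definition katu_kernel (R : realType) (alpha rho eta x : R) (f : R -> R) : R -> R :=
  fun tau => powR tau (rho * (eta + 1) - 1) / powR (powR x rho - powR tau rho) (1 - alpha) * f tau.

Definition katugampola (R : realType) (rho alpha beta eta k : R) (f : R -> R) (x : R) : R :=
  powR rho (1 - beta) * powR x k / Gamma alpha *
  Rintegral (@lebesgue_measure R) `]0%R, x[ (katu_kernel alpha rho eta x f).

(* The fractional integral is monotone in its integrand, since its prefactor
   and kernel are nonnegative ([powR] and [Gamma] are nonnegative everywhere);
   the inequality is then the expanded form of
   (J^{a,b} z2 - J^{a,b} v) (J^{d,l} v - J^{d,l} z1) >= 0. *)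
From mathcomp Require Import all_boot all_order all_algebra.
From mathcomp Require Import all_classical all_reals all_analysis.
From mathcomp Require Import ring.
Import Order.TTheory GRing.Theory Num.Theory.
Local Open Scope classical_set_scope.
Local Open Scope ring_scope.

Lemma ler_cross_mul (R : numDomainType) (a1 a2 b1 b2 : R) :
  a1 <= a2 -> b1 <= b2 -> a1 * b2 + a2 * b1 <= a2 * b2 + a1 * b1.
Proof.
move=> ha hb; rewrite -subr_ge0.
have -> : a2 * b2 + a1 * b1 - (a1 * b2 + a2 * b1) = (a2 - a1) * (b2 - b1) by ring.
by rewrite mulr_ge0 ?subr_ge0.
Qed.

Lemma Gamma_ge0 {R : realType} (a : R) : 0 <= Gamma a.
Proof.
by apply: Rintegral_ge0 => t _; rewrite mulr_ge0 ?powR_ge0 ?expR_ge0.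
Qed.

Lemma le_katugampola {R : realType} (rho alpha beta eta k x : R) {f g : R -> R} :
  (forall t, 0 < t -> f t <= g t) ->
  (@lebesgue_measure R).-integrable `]0%R, x[
    (fun t => (katu_kernel alpha rho eta x f t)%:E) ->
  (@lebesgue_measure R).-integrable `]0%R, x[
    (fun t => (katu_kernel alpha rho eta x g t)%:E) ->
  katugampola rho alpha beta eta k f x <= katugampola rho alpha beta eta k g x.
Proof.
move=> fg intf intg; apply: ler_wpM2l.
  by rewrite !mulr_ge0 ?invr_ge0 ?powR_ge0 ?Gamma_ge0.
apply: le_Rintegral => // t; rewrite /= in_itv /= => /andP[t0 _].
by apply: ler_wpM2l; [rewrite mulr_ge0 ?invr_ge0 ?powR_ge0 | exact: fg].
Qed.

Theorem theorem1 (R : realType) (v z1 z2 : R -> R)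
  (hv : (@lebesgue_measure R).-integrable `[0%R, +oo[ (fun t => (v t)%:E))
  (hz1 : (@lebesgue_measure R).-integrable `[0%R, +oo[ (fun t => (z1 t)%:E))
  (hz2 : (@lebesgue_measure R).-integrable `[0%R, +oo[ (fun t => (z2 t)%:E))
  (hle1 : forall t : R, 0 <= t -> z1 t <= v t)
  (hle2 : forall t : R, 0 <= t -> v t <= z2 t)
  (x alpha rho delta beta eta k lambda : R)
  (hx : 0 < x) (halpha : 0 < alpha) (hrho : 0 < rho) (hdelta : 0 < delta)
  (* existence of all the fractional integrals appearing in the statement *)
  (iav : (@lebesgue_measure R).-integrable `]0%R, x[
           (fun t => (katu_kernel alpha rho eta x v t)%:E))
  (iaz1 : (@lebesgue_measure R).-integrable `]0%R, x[
           (fun t => (katu_kernel alpha rho eta x z1 t)%:E))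
  (iaz2 : (@lebesgue_measure R).-integrable `]0%R, x[
           (fun t => (katu_kernel alpha rho eta x z2 t)%:E))
  (idv : (@lebesgue_measure R).-integrable `]0%R, x[
           (fun t => (katu_kernel delta rho eta x v t)%:E))
  (idz1 : (@lebesgue_measure R).-integrable `]0%R, x[
           (fun t => (katu_kernel delta rho eta x z1 t)%:E))
  (idz2 : (@lebesgue_measure R).-integrable `]0%R, x[
           (fun t => (katu_kernel delta rho eta x z2 t)%:E)) :
  katugampola rho alpha beta eta k z2 x * katugampola rho delta lambda eta k v x
  + katugampola rho alpha beta eta k v x * katugampola rho delta lambda eta k z1 x
  >= katugampola rho alpha beta eta k v x * katugampola rho delta lambda eta k v x
  + katugampola rho alpha beta eta k z2 x * katugampola rho delta lambda eta k z1 x.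
Proof.
have Jv_le_Jz2 : katugampola rho alpha beta eta k v x
                 <= katugampola rho alpha beta eta k z2 x.
  by apply: le_katugampola iav iaz2 => t /ltW; exact: hle2.
have Jz1_le_Jv : katugampola rho delta lambda eta k z1 x
                 <= katugampola rho delta lambda eta k v x.
  by apply: le_katugampola idz1 idv => t /ltW; exact: hle1.
exact: ler_cross_mul Jv_le_Jz2 Jz1_le_Jv.
Qed.
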